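(* For every forward trie $\mathsf{T}_f$ with $n$ nodes over an alphabet of size $\sigma$, the minimal deterministic finite automaton accepting $\mathrm{Suffix}(\mathsf{T}_f)$ has $O(\sigma n)$ transitions. Moreover, for some forward tries $\mathsf{T}_f$ with $n$ nodes, this minimal DFA has $\Omega(\sigma n)$ transitions, which is $\Omega(n^2)$ for an alphabet of size $\sigma=\Theta(n)$. The same upper and lower bounds hold for the minimal DFA accepting $\mathrm{Substr}(\mathsf{T}_f)$.
   Context: An alphabet $\Sigma$ is a finite ordered set of characters, and $\sigma=|\Sigma|$. A forward trie $\mathsf{T}_f$ is a rooted tree with $n$ nodes in which every edge is directed from parent to child and labeled by a single character of $\Sigma$, such that the edges leaving any node carry pairwise distinct labels. For nodes $u,v$ with $u$ an ancestor of $v$ (possibly $u=v$), $\mathrm{str}_f(u,v)$ is the string of labels read along the downward path from $u$ to $v$. Define $\mathrm{Substr}(\mathsf{T}_f)=\{\mathrm{str}_f(u,v): u \text{ an ancestor of } v\}$ and $\mathrm{Suffix}(\mathsf{T}_f)=\{\mathrm{str}_f(u,\ell): \ell \text{ a leaf},\ u \text{ an ancestor of } \ell\}$. DFAs are partial (transitions to a dead state are not counted). *)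

From mathcomp Require Import all_boot.
Set Implicit Arguments. Unset Strict Implicit. Unset Printing Implicit Defensive.

(* A forward trie over the alphabet Sigma with n nodes: the nodes are 'I_n,
   every non-root node v has the parent [parent v] and the edge
   (parent v) -> v is labelled [label v].  [parent root = root] is a dummy
   convention; the root's label is irrelevant. *)
Record trie (Sigma : finType) (n : nat) := Trie {
  root   : 'I_n;
  parent : 'I_n -> 'I_n;
  label  : 'I_n -> Sigma;
  parent_root : parent root = root;
  reach_root : forall v : 'I_n, exists k, iter k parent v = root;
  label_inj : forall u v : 'I_n, u != root -> v != root ->
      parent u = parent v -> label u = label v -> u = v
}.

(* u = iter k parent v is an ancestor of v at distance exactly k (no step
   passes through the root).  The string read downward from u to v. *)
Definition up_path (Sigma : finType) (n : nat) (T : trie Sigma n)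
    (v : 'I_n) (k : nat) : Prop :=
  forall i, i < k -> iter i (parent T) v != root T.

Definition path_str (Sigma : finType) (n : nat) (T : trie Sigma n)
    (v : 'I_n) (k : nat) : seq Sigma :=
  rev [seq label T (iter i (parent T) v) | i <- iota 0 k].

Definition is_leaf (Sigma : finType) (n : nat) (T : trie Sigma n) (v : 'I_n) :=
  forall c : 'I_n, c != root T -> parent T c <> v.

Definition Substr (Sigma : finType) (n : nat) (T : trie Sigma n)
    (w : seq Sigma) : Prop :=
  exists (v : 'I_n) (k : nat), up_path T v k /\ w = path_str T v k.

Definition Suffix (Sigma : finType) (n : nat) (T : trie Sigma n)
    (w : seq Sigma) : Prop :=
  exists (v : 'I_n) (k : nat), is_leaf T v /\ up_path T v k /\ w = path_str T v k.

Record dfa (Sigma : finType) := Dfa {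
  state : finType;
  start : state;
  delta : state -> Sigma -> option state;   (* None = missing transition *)
  final : pred state
}.

Fixpoint run (Sigma : finType) (M : dfa Sigma) (q : state M) (w : seq Sigma)
    : option (state M) :=
  match w with
  | [::] => Some q
  | a :: w' => match delta q a with Some q' => run q' w' | None => None end
  end.

Definition accepted (Sigma : finType) (M : dfa Sigma) (w : seq Sigma) : bool :=
  if run (start M) w is Some q then final q else false.

Definition accepts (Sigma : finType) (M : dfa Sigma) (L : seq Sigma -> Prop) :=
  forall w, L w <-> accepted M w.

Definition ntrans (Sigma : finType) (M : dfa Sigma) : nat :=
  #|[set qa : (state M * Sigma)%type | delta qa.1 qa.2 != None]|.

Definition minimal_dfa (Sigma : finType) (M : dfa Sigma) (L : seq Sigma -> Prop) :=
  accepts M L /\ forall M' : dfa Sigma, accepts M' L -> #|state M| <= #|state M'|.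

From Pilot Require Import Defs.
From mathcomp Require Import all_boot.
From mathcomp Require Import zify.
From Stdlib Require Import ClassicalEpsilon Classical.
Set Implicit Arguments. Unset Strict Implicit. Unset Printing Implicit Defensive.

(* For a word w, its end-set is the set of nodes at which an
   upward path spelling w ends.  Reading a letter maps end-sets to end-sets,
   and whether w lies in Suffix(T) (resp. Substr(T)) depends only on its
   end-set, so the nonempty end-sets are the states of a DFA for each
   language.  Two words with a common end node are suffixes of one another,
   hence end-sets form a laminar family, and a laminar family of subsets of an
   n-element set has at most 2n+1 members.  A minimal DFA thus has at most
   2n+1 states and at most (2n+1) sigma <= 3 sigma n transitions.

   In the broom trie (a spine of m edges labelled c_0 followed
   by k leaves with distinct letters c_1..c_k) every DFA for a language
   between Suffix and Substr must separate the states reached on c_0^i,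
   i < m, each of which has k+1 outgoing transitions; choosing
   k = min(sigma-1, n/2-1) gives m (k+1) >= sigma n / 6. *)

Section EndSets.
Variables (S : finType) (n : nat) (T : trie S n).

Definition step (X : {set 'I_n}) (a : S) : {set 'I_n} :=
  [set v | (v != Defs.root T) && (label T v == a) && (parent T v \in X)].

Definition endset (w : seq S) : {set 'I_n} := foldl step setT w.

Lemma step_mono (X Y : {set 'I_n}) a : X \subset Y -> step X a \subset step Y a.
Proof.
move=> /subsetP sXY; apply/subsetP => v; rewrite !inE => /andP[-> /sXY ->].
by rewrite andbT.
Qed.

Lemma foldl_step_mono w (X Y : {set 'I_n}) :
  X \subset Y -> foldl step X w \subset foldl step Y w.
Proof. by elim: w X Y => //= a w IHw X Y sXY; apply/IHw/step_mono. Qed.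

Lemma foldl_step0 w : foldl step set0 w = set0.
Proof.
elim: w => //= a w IHw; suff -> : step set0 a = set0 by [].
by apply/setP => v; rewrite !inE andbF.
Qed.

Lemma endset_rcons w a : endset (rcons w a) = step (endset w) a.
Proof. by rewrite /endset -cats1 foldl_cat. Qed.

Lemma endset_cat w z : endset (w ++ z) = foldl step (endset w) z.
Proof. by rewrite /endset foldl_cat. Qed.

Lemma size_path_str v k : size (path_str T v k) = k.
Proof. by rewrite /path_str size_rev size_map size_iota. Qed.

Lemma path_strS v k :
  path_str T v k.+1 = rcons (path_str T (parent T v) k) (label T v).
Proof.
rewrite /path_str -addn1 addnC iotaD /= rev_cons; congr rcons.
rewrite (iotaDl 1 0) -map_comp; congr rev; apply: eq_map => i /=.
by rewrite add0n -iterS iterSr.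
Qed.

Lemma path_str_add k j v :
  path_str T v (k + j) = path_str T (iter k (parent T) v) j ++ path_str T v k.
Proof.
elim: k v => [|k IHk] v; first by rewrite /path_str /= cats0.
by rewrite addSn path_strS IHk path_strS rcons_cat iterSr.
Qed.

Lemma up_pathS v k :
  up_path T v k.+1 <-> v != Defs.root T /\ up_path T (parent T v) k.
Proof.
split=> [Hv | [Hv Hp]].
  split=> [|i lt_ik]; first exact: (Hv 0).
  by rewrite -iterSr; apply: Hv.
by case=> [|i] lt_ik //=; rewrite -iterS iterSr; apply: Hp.
Qed.

Lemma endsetP w v :
  v \in endset w <-> up_path T v (size w) /\ path_str T v (size w) = w.
Proof.
elim/last_ind: w v => [|w a IHw] v; first by rewrite inE; split=> // _; split.
rewrite endset_rcons size_rcons path_strS up_pathS inE -andbA; split.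
  by move=> /and3P[vr /eqP <- /IHw[Hup ->]].
move=> [[-> Hup] /eqP]; rewrite eqseq_rcons => /andP[/eqP Hw ->] /=.
exact/IHw.
Qed.

Definition leafb (v : 'I_n) : bool :=
  [forall c, (c != Defs.root T) ==> (parent T c != v)].

Lemma leafbP v : is_leaf T v <-> leafb v.
Proof.
split=> [Hv | /forallP Hv c Hc].
  by apply/forallP => c; apply/implyP => Hc; apply/eqP; apply: Hv.
by apply/eqP; move: (Hv c); rewrite Hc.
Qed.

Lemma SuffixE w : Suffix T w <-> [exists v in endset w, leafb v].
Proof.
split=> [[v [k [Hl [Hup ->]]]] | /existsP[v /andP[/endsetP[Hup Hw] Hl]]].
  apply/existsP; exists v; apply/andP; split; last exact/leafbP.
  by apply/endsetP; rewrite size_path_str.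
by exists v, (size w); split=> //; apply/leafbP.
Qed.

Lemma SubstrE w : Substr T w <-> endset w != set0.
Proof.
split=> [[v [k [Hup ->]]] | /set0Pn[v /endsetP[Hup Hw]]]; last by exists v, (size w).
by apply/set0Pn; exists v; apply/endsetP; rewrite size_path_str.
Qed.

Lemma Suffix_Substr w : Suffix T w -> Substr T w.
Proof. by case=> v [k [_ H]]; exists v, k. Qed.

Lemma endset_common_suffix w w' v :
  v \in endset w -> v \in endset w' -> size w <= size w' ->
  exists z, w' = z ++ w.
Proof.
move=> /endsetP[_ Hw] /endsetP[_ Hw'] le_ww'.
rewrite -(subnK le_ww') addnC path_str_add Hw in Hw'.
by exists (path_str T (iter (size w) (parent T) v) (size w' - size w)).
Qed.

Lemma endset_nested w w' :
  endset w :&: endset w' != set0 ->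
  (endset w \subset endset w') || (endset w' \subset endset w).
Proof.
case/set0Pn=> v; rewrite inE => /andP[vw vw'].
have nested z u : endset (z ++ u) \subset endset u.
  by rewrite endset_cat; apply: foldl_step_mono; apply: subsetT.
case: (leqP (size w) (size w')) => [le_ww' | /ltnW le_w'w].
  by have [z ->] := endset_common_suffix vw vw' le_ww'; rewrite nested orbT.
by have [z ->] := endset_common_suffix vw' vw le_w'w; rewrite nested.
Qed.

End EndSets.

(* A laminar family of subsets of an m-element set has at most 2m+1
   members: deleting one point x loses at most two members. *)
Section Laminar.
Variable T : finType.

Definition laminar (F : {set {set T}}) :=
  forall A B, A \in F -> B \in F -> A :&: B != set0 -> (A \subset B) || (B \subset A).

Variables (F : {set {set T}}) (x : T).
Hypothesis lamF : laminar F.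

Lemma laminar_setD1 : laminar ((fun A => A :\ x) @: F).
Proof.
move=> _ _ /imsetP[A AF ->] /imsetP[B BF ->] meet.
have : A :&: B != set0 by apply: subset_neq0 meet; apply: setISS; apply: subsetDl.
by case/(lamF AF BF)/orP=> sAB; apply/orP; [left | right]; apply: setSD.
Qed.

(* Deleting x identifies a member A containing x with A :\ x when the latter
   is also a member.  Besides the empty set, at most one such A :\ x exists:
   two of them would come from nested members A, A' and then be nested in
   the opposite direction. *)
Lemma laminar_overlap :
  #|(fun A => A :\ x) @: [set A in F | x \in A] :&: [set A in F | x \notin A]| <= 2.
Proof.
set O := _ :&: _; rewrite (cardsD1 set0 O) -[2]/(1 + 1).
apply: leq_add; first by case: (_ \in _).
have split_x B : B \in O :\ set0 ->
    exists2 A, [/\ A \in F, x \in A & B = A :\ x] & B != set0 /\ B \in F.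
  rewrite !inE => /andP[nB /andP[/imsetP[A + eB] /andP[BF _]]].
  by rewrite inE => /andP[AF xA]; exists A.
have shrink A A' : A \in F -> A' \in F -> x \in A -> A \subset A' ->
    A :\ x != set0 -> A' :\ x \in F -> A' :\ x \subset A :\ x.
  move=> AF A'F xA sAA' nB B'F.
  have : (A' :\ x) :&: A != set0.
    by apply: subset_neq0 nB; rewrite subsetI setSD // subsetDl.
  case/(lamF B'F AF)/orP=> [sB'A | /subsetP/(_ x xA)]; last by rewrite !inE eqxx.
  by apply/subsetP => y /setD1P[xy yA']; rewrite !inE xy (subsetP sB'A) // !inE xy.
apply/card_le1_eqP => B B'.
move=> /split_x[A [AF xA ->] [nB BF]] /split_x[A' [A'F xA' ->] [nB' B'F]].
have : A :&: A' != set0 by apply/set0Pn; exists x; rewrite inE xA xA'.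
case/(lamF AF A'F)/orP=> sAA'; apply/eqP; rewrite eqEsubset.
  by rewrite (shrink A A') // setSD.
by rewrite (shrink A' A) // setSD.
Qed.

Lemma card_laminar_setD1 : #|F| <= #|(fun A => A :\ x) @: F| + 2.
Proof.
pose g A := A :\ x.
pose F1 := [set A in F | x \in A]; pose F2 := [set A in F | x \notin A].
have cardF : #|F| = #|F1| + #|F2|.
  rewrite -(cardsID [set A : {set T} | x \in A] F).
  by congr (_ + _); apply: eq_card => A; rewrite !inE andbC.
have g_id (A : {set T}) : x \notin A -> g A = A.
  by move=> xA; apply/setP => y; rewrite !inE; case: eqP => // ->; rewrite (negbTE xA).
have imgF : g @: F = g @: F1 :|: F2.
  apply/setP => B; apply/imsetP/setUP => [[A AF ->] | [/imsetP[A] | ]].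
  - case xA: (x \in A); first by left; apply/imsetP; exists A; rewrite ?inE ?AF ?xA.
    by right; rewrite g_id ?xA // inE AF xA.
  - by rewrite inE => /andP[AF _] ->; exists A.
  - by rewrite inE => /andP[BF xB]; exists B; rewrite ?g_id.
have cardF1 : #|g @: F1| = #|F1|.
  apply: card_in_imset => A B; rewrite !inE => /andP[_ xA] /andP[_ xB] eqAB.
  by rewrite -(setD1K xA) -(setD1K xB) -/(g A) eqAB.
have := cardsUI (g @: F1) F2; rewrite -imgF cardF1 -cardF => <-.
by rewrite leq_add2l laminar_overlap.
Qed.

End Laminar.

Lemma laminar_card (T : finType) (U : {set T}) (F : {set {set T}}) :
  laminar F -> (forall A, A \in F -> A \subset U) -> #|F| <= (2 * #|U|).+1.
Proof.
move cardU: #|U| => m; elim: m U F cardU => [|m IHm] U F cardU lamF subU.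
  have U0 : U = set0 by apply/eqP; rewrite -cards_eq0 cardU.
  have : F \subset [set set0] by apply/subsetP => A /subU; rewrite U0 subset0 inE.
  by move/subset_leq_card; rewrite cards1.
have [x xU] : exists x, x \in U by apply/set0Pn; rewrite -card_gt0 cardU.
have cardUx : #|U :\ x| = m by move: (cardsD1 x U); rewrite xU cardU add1n => -[].
have subUx A : A \in (fun A => A :\ x) @: F -> A \subset U :\ x.
  by case/imsetP=> B /subU sBU ->; apply: setSD.
apply: leq_trans (card_laminar_setD1 x lamF) _.
have := IHm _ _ cardUx (laminar_setD1 (x := x) lamF) subUx.
by rewrite mulnS add2n addn2 !ltnS.
Qed.

Section EndSetAutomaton.
Variables (S : finType) (n : nat) (T : trie S n).

Definition is_endset (X : {set 'I_n}) : bool :=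
  (X != set0) &&
  (if excluded_middle_informative (exists w, endset T w = X) then true else false).

Lemma is_endsetP X : reflect (X != set0 /\ exists w, endset T w = X) (is_endset X).
Proof.
rewrite /is_endset; case: excluded_middle_informative => Hw.
  by rewrite andbT; apply: (iffP idP) => [|[]].
by rewrite andbF; right=> -[].
Qed.

Lemma is_endset_step (X : {set 'I_n}) a :
  is_endset X -> step T X a != set0 -> is_endset (step T X a).
Proof.
case/is_endsetP=> _ [w <-] ne; apply/is_endsetP; split=> //.
by exists (rcons w a); rewrite endset_rcons.
Qed.

Lemma is_endset_setT : is_endset setT.
Proof. by apply/is_endsetP; split; [apply/set0Pn; exists (Defs.root T) | exists [::]]. Qed.

Definition endset_state := {X : {set 'I_n} | is_endset X}.

Definition endset_dfa (fin : pred {set 'I_n}) : dfa S :=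
  @Dfa S endset_state (exist _ setT is_endset_setT)
    (fun s a => insub (step T (val s) a)) (fun s => fin (val s)).

Lemma run_endset_dfa fin w (s : endset_state) :
  run (M := endset_dfa fin) s w = insub (foldl (step T) (val s) w).
Proof.
elim: w s => [|a w IHw] s /=; first by rewrite valK.
case: insubP => [s' _ <- | not_a]; first exact: IHw.
have step0 : step T (val s) a = set0.
  by apply: contraNeq not_a; apply: is_endset_step (valP s).
by rewrite step0 foldl_step0 insubN // /is_endset eqxx.
Qed.

Lemma accepted_endset_dfa fin w :
  accepted (endset_dfa fin) w = (endset T w != set0) && fin (endset T w).
Proof.
rewrite /accepted run_endset_dfa -/(endset T w).
case: insubP => [s /is_endsetP[-> _] <- // | not_w].
suff -> : endset T w = set0 by rewrite eqxx.
by apply: contraNeq not_w => ne; apply/is_endsetP; split=> //; exists w.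
Qed.

(* End-sets form a laminar family, so there are at most 2n+1 states. *)
Lemma card_endset_state : #|{: endset_state}| <= (2 * n).+1.
Proof.
rewrite card_sig.
have -> : #|[pred X | is_endset X]| = #|[set X | is_endset X]|.
  by apply: eq_card => X; rewrite !inE.
have := @laminar_card _ setT [set X | is_endset X]; rewrite cardsT card_ord.
apply => [A B | A _]; last exact: subsetT.
by rewrite !inE => /is_endsetP[_ [w <-]] /is_endsetP[_ [w' <-]]; apply: endset_nested.
Qed.

Lemma suffix_dfa_accepts :
  accepts (endset_dfa (fun X => [exists v in X, leafb T v])) (Suffix T).
Proof.
move=> w; rewrite SuffixE accepted_endset_dfa; case: eqP => [-> | _] //=.
by split=> // /existsP[v]; rewrite inE.
Qed.

Lemma substr_dfa_accepts : accepts (endset_dfa predT) (Substr T).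
Proof. by move=> w; rewrite SubstrE accepted_endset_dfa andbT. Qed.

End EndSetAutomaton.

Lemma ntrans_le (S : finType) (M : dfa S) : ntrans M <= #|state M| * #|S|.
Proof. by rewrite -card_prod; apply: subset_leq_card; apply/subsetP. Qed.

Lemma minimal_dfa_exists (S : finType) (L : seq S -> Prop) (M : dfa S) :
  accepts M L -> exists M', minimal_dfa M' L.
Proof.
move: {2}#|state M| (leqnn #|state M|) => k; elim: k M => [|k IHk] M le_Mk accM.
  by exists M; split=> // M' _; move: le_Mk; rewrite leqn0 => /eqP ->.
have [[M' [accM' le_M'k]] | smaller] :=
  classic (exists M' : dfa S, accepts M' L /\ #|state M'| <= k).
  exact: IHk accM'.
exists M; split=> // M' accM'; apply: leq_trans le_Mk _; rewrite ltnNge.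
by apply/negP => le_M'k; apply: smaller; exists M'.
Qed.

Lemma trie_upper_bound (S : finType) (n : nat) (T : trie S n) fin
    (L : seq S -> Prop) (M : dfa S) :
  accepts (endset_dfa T fin) L -> minimal_dfa M L -> ntrans M <= 3 * #|S| * n.
Proof.
move=> accT [_ minM].
have n_gt0 : 0 < n := leq_ltn_trans (leq0n _) (ltn_ord (Defs.root T)).
have le_Mn := leq_trans (minM _ accT) (card_endset_state T).
apply: leq_trans (ntrans_le M) _; move: le_Mn n_gt0.
by move: #|state M| #|S| => a b; nia.
Qed.

Lemma run_cat (S : finType) (M : dfa S) (q : state M) u z :
  run q (u ++ z) = obind (fun q' => run q' z) (run q u).
Proof. by elim: u q => [|a u IHu] q //=; case: (delta q a). Qed.

(* Counting transitions along a spine of prefixes: if every prefix c^i with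
   i < m can be continued in L by each letter of A, while c^m can be completed
   into a word of L but c^(m+1) cannot, then the states reached on c^0, ...,
   c^(m-1) are pairwise distinct (Myhill-Nerode) and each carries a
   transition for every letter of A. *)
Section PrefixCounting.
Variables (S : finType) (L : seq S -> Prop) (M : dfa S) (c : S) (m : nat).
Hypotheses (accM : accepts M L) (completion : exists t, L (nseq m c ++ t))
  (dead : forall y, ~ L (nseq m.+1 c ++ y)).

(* The state reached on c^i (the start state if c^i dies). *)
Definition prefix_state (i : nat) : state M :=
  odflt (start M) (run (start M) (nseq i c)).

Lemma run_prefix i : i <= m -> run (start M) (nseq i c) = Some (prefix_state i).
Proof.
move=> le_im; have [t /accM] := completion.
rewrite -(subnKC le_im) nseqD -catA /accepted run_cat /prefix_state.
by case: (run _ (nseq i c)).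
Qed.

(* From c^i the word c^(m-i) t is accepted, from c^j (i < j) it is not. *)
Lemma prefix_state_inj i j :
  i <= m -> j <= m -> prefix_state i = prefix_state j -> i = j.
Proof.
wlog lt_ij : i j / i < j => [Hwlog le_im le_jm eq_ij|].
  by case: (ltngtP i j) => // [lt_ij | lt_ji]; [|symmetry]; apply: Hwlog.
move=> le_im le_jm eq_ij; have [t Lt] := completion.
pose y := nseq (m - i) c ++ t.
have acc_i : accepted M (nseq i c ++ y) by apply/accM; rewrite catA -nseqD subnKC.
have rej_j : ~~ accepted M (nseq j c ++ y).
  apply/negP => /accM; rewrite catA -nseqD.
  by rewrite -(subnKC (_ : m.+1 <= j + (m - i))) ?nseqD -?catA; [apply: dead | lia].
move: acc_i rej_j; rewrite /accepted !run_cat run_prefix // run_prefix //= eq_ij.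
by move=> ->.
Qed.

Lemma prefix_count (A : seq S) : uniq A ->
  (forall i a, i < m -> a \in A -> exists y, L (nseq i c ++ a :: y)) ->
  m * size A <= ntrans M.
Proof.
move=> uniqA continued.
have has_trans i a : i < m -> a \in A -> delta (prefix_state i) a != None.
  move=> lt_im aA; have [y /accM] := continued i a lt_im aA.
  by rewrite /accepted run_cat run_prefix 1?ltnW //=; case: (delta _ a).
pose f (p : 'I_m * 'I_(size A)) := (prefix_state p.1, nth c A p.2).
have f_inj : injective f.
  move=> [i a] [j b] [eq_ij eq_ab]; congr pair; apply: val_inj.
    by apply: prefix_state_inj eq_ij; apply: ltnW.
  by apply/eqP; rewrite -(nth_uniq c (ltn_ord a) (ltn_ord b) uniqA) eq_ab.
rewrite -[m]card_ord -[size A]card_ord -card_prod -(card_imset _ f_inj).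
apply: subset_leq_card; apply/subsetP => _ /imsetP[[i a] _ ->].
by rewrite inE has_trans // mem_nth.
Qed.

End PrefixCounting.

Lemma nseqSr (T : Type) i (a : T) : nseq i.+1 a = rcons (nseq i a) a.
Proof. by rewrite -addn1 nseqD cats1. Qed.

(* The broom: a spine 0 - 1 - ... - m whose edges all carry the letter c_0,
   and k leaves m+1, ..., m+k hanging from m with the letters c_1, ..., c_k,
   where c_0, c_1, ... enumerate the alphabet (so k < sigma). *)
Section Broom.
Variables (S : finType) (x0 : S) (N m k : nat).
Hypotheses (Hmk : m + k = N) (Hk : k < #|S|).

Definition letter (i : nat) : S := nth x0 (enum S) i.

Lemma letter_inj i j : i < #|S| -> j < #|S| -> letter i = letter j -> i = j.
Proof.
move=> lt_iS lt_jS eq_ij; apply/eqP.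
by rewrite -(nth_uniq x0 _ _ (enum_uniq S)) -?cardT //; apply/eqP.
Qed.

(* Nodes 0..m form the spine (node 0 is the root); nodes m+1..N are leaves
   below m. *)
Definition broom_parent (v : 'I_N.+1) : 'I_N.+1 :=
  if v <= m then inord v.-1 else inord m.

Definition broom_label (v : 'I_N.+1) : S :=
  if v <= m then letter 0 else letter (v - m).

Lemma broom_parentE (v : 'I_N.+1) :
  broom_parent v = (if v <= m then v.-1 else m) :> nat.
Proof.
by rewrite /broom_parent; case: ifP => _; rewrite inordK //; have := ltn_ord v; lia.
Qed.

Lemma broom_parent_root : broom_parent ord0 = ord0.
Proof. by apply: ord_inj; rewrite broom_parentE. Qed.

(* Following parents strictly decreases a nonzero node. *)
Lemma broom_reach_root (v : 'I_N.+1) : exists i, iter i broom_parent v = ord0.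
Proof.
exists v; apply: ord_inj => /=.
suff le_iter j : iter j broom_parent v <= v - j.
  by have := le_iter v; rewrite subnn leqn0 => /eqP.
elim: j => [|j IHj] /=; first by rewrite subn0.
by rewrite broom_parentE; case: ifP; lia.
Qed.

Lemma broom_label_inj (u v : 'I_N.+1) : u != ord0 -> v != ord0 ->
  broom_parent u = broom_parent v -> broom_label u = broom_label v -> u = v.
Proof.
rewrite -!(inj_eq (@ord_inj _)) /= => u0 v0 /(congr1 (@nat_of_ord _)).
rewrite !broom_parentE /broom_label.
have := ltn_ord u; have := ltn_ord v => lt_v lt_u.
case: (leqP u m) => le_um; case: (leqP v m) => le_vm eq_p /letter_inj eq_l;
  apply: ord_inj.
- lia.
- have := eq_l ltac:(lia) ltac:(lia); lia.
- have := eq_l ltac:(lia) ltac:(lia); lia.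
- have := eq_l ltac:(lia) ltac:(lia); lia.
Qed.

Definition broom : trie S N.+1 :=
  Trie broom_parent_root broom_reach_root broom_label_inj.

Let c0 := letter 0.

Lemma broom_label_c0 (v : 'I_N.+1) : (broom_label v == c0) = (v <= m).
Proof.
rewrite /broom_label; case: leqP => [|lt_mv]; first by rewrite eqxx.
by apply/negbTE/eqP => /letter_inj; have := ltn_ord v; lia.
Qed.

Lemma endset_spine i : endset broom (nseq i.+1 c0) = [set v : 'I_N.+1 | i < v <= m].
Proof.
elim: i => [|i IHi]; rewrite nseqSr endset_rcons ?IHi; apply/setP => v;
  rewrite !inE /= -(inj_eq (@ord_inj _)) broom_label_c0 /= ?broom_parentE;
  case: (leqP v m); lia.
Qed.

(* The spine is too short for c_0^(m+1). *)
Lemma endset_spine_dead y : endset broom (nseq m.+1 c0 ++ y) = set0.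
Proof.
rewrite endset_cat endset_spine -(foldl_step0 broom y); congr foldl.
by apply/setP => v; rewrite !inE; lia.
Qed.

(* Every parent lies on the spine, so the nodes beyond m are leaves, and so
   is the tip m when there are no other leaves. *)
Lemma broom_leaf (v : 'I_N.+1) : m < v -> leafb broom v.
Proof.
move=> lt_mv; apply/forallP => u; apply/implyP => _ /=.
by rewrite -(inj_eq (@ord_inj _)) /= broom_parentE; case: leqP; lia.
Qed.

Lemma broom_tip_leaf : k = 0 -> leafb broom (inord m).
Proof.
move=> k0; apply/forallP => u; apply/implyP => /=.
rewrite -!(inj_eq (@ord_inj _)) /= broom_parentE inordK; last lia.
by case: leqP; have := ltn_ord u; lia.
Qed.

Lemma tip_in_spine i : i <= m -> (inord m : 'I_N.+1) \in endset broom (nseq i c0).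
Proof.
by case: i => [|i] le_im; rewrite ?inE // endset_spine inE inordK; lia.
Qed.

Lemma leaf_in_endset i j : i <= m -> 0 < j <= k ->
  (inord (m + j) : 'I_N.+1) \in endset broom (nseq i c0 ++ [:: letter j]).
Proof.
move=> le_im /andP[j_gt0 le_jk].
have parent_tip : broom_parent (inord (m + j)) = inord m.
  by apply: ord_inj; rewrite broom_parentE !inordK; case: leqP; lia.
rewrite cats1 endset_rcons inE /= parent_tip tip_in_spine // andbT.
rewrite -(inj_eq (@ord_inj _)) /broom_label /= inordK; last lia.
by case: leqP => [|_]; [lia | rewrite addKn eqxx; lia].
Qed.

(* Apply [prefix_count] with the letters c_0..c_k: c_j (j > 0) leads to a leaf
   at once, c_0 continues along the spine, and c_0^m is completed by c_1 (or
   by nothing when the tip itself is a leaf). *)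
Lemma broom_lower_bound (L : seq S -> Prop) (M : dfa S) :
  (forall w, Suffix broom w -> L w) -> (forall w, L w -> Substr broom w) ->
  accepts M L -> m * k.+1 <= ntrans M.
Proof.
move=> SuffixL LSubstr accM.
have leaf_word w v : v \in endset broom w -> leafb broom v -> L w.
  by move=> vw leaf_v; apply/SuffixL/SuffixE/existsP; exists v; rewrite vw.
have leaf_letter i j : i <= m -> 0 < j <= k -> L (nseq i c0 ++ [:: letter j]).
  move=> le_im le_jk; apply: leaf_word (leaf_in_endset le_im le_jk) _.
  by apply: broom_leaf; rewrite inordK; lia.
pose t := if k == 0 then [::] else [:: letter 1].
have completion : L (nseq m c0 ++ t).
  rewrite /t; case: eqP => [k0 | k_ne0]; last by apply: leaf_letter; lia.
  by rewrite cats0; apply: leaf_word (tip_in_spine (leqnn m)) (broom_tip_leaf k0).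
rewrite -[k.+1](size_iota 0) -(size_map letter).
apply: (prefix_count (c := c0) accM); first by exists t.
- by move=> y /LSubstr /SubstrE; rewrite endset_spine_dead eqxx.
- rewrite map_inj_in_uniq ?iota_uniq // => a b; rewrite !mem_iota => lt_a lt_b.
  by apply: letter_inj; lia.
- move=> i a lt_im /mapP[[|j]]; rewrite mem_iota => lt_jk ->; last first.
    by exists [::]; apply: leaf_letter; lia.
  exists (nseq (m - i.+1) c0 ++ t).
  rewrite -cat_cons -[_ :: nseq _ _]/(nseq _.+1 c0) catA -nseqD.
  by have -> : i + (m - i.+1).+1 = m by lia.
Qed.

End Broom.

(* Choosing k = min(sigma - 1, n/2 - 1) leaves and a spine of m = n - 1 - k
   edges gives m (k + 1) >= sigma n / 6. *)
Lemma broom_dimensions (s n : nat) : 2 <= n -> 0 < s <= n ->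
  exists m k, [/\ m + k = n.-1, k < s & s * n <= 6 * (m * k.+1)].
Proof.
move=> n_ge2 s_range; pose k := minn (s - 1) (n %/ 2 - 1).
exists (n.-1 - k), k; split; rewrite /k; try lia.
case: (leqP (s - 1) (n %/ 2 - 1)) => le_sn.
  have -> : (s - 1).+1 = s by lia.
  have : n <= 2 * (n.-1 - (s - 1)) by lia.
  by move: (n.-1 - (s - 1)) => a; nia.
have -> : (n %/ 2 - 1).+1 = n %/ 2 by lia.
have : n <= 2 * (n.-1 - (n %/ 2 - 1)) by lia.
have : n <= 3 * (n %/ 2) by lia.
by move: (n.-1 - (n %/ 2 - 1)) (n %/ 2) => a b; nia.
Qed.

Lemma trie_lower_bound (S : finType) (n : nat) : 2 <= n -> 0 < #|S| <= n ->
  exists T : trie S n, forall (L : seq S -> Prop) (M : dfa S),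
    (forall w, Suffix T w -> L w) -> (forall w, L w -> Substr T w) ->
    accepts M L -> #|S| * n <= 6 * ntrans M.
Proof.
move=> n_ge2 S_range.
have [x0 _] : exists x0 : S, x0 \in S by apply/card_gt0P; case/andP: S_range.
have [m [k [Hmk Hk bound]]] := broom_dimensions n_ge2 S_range.
move: Hmk bound; case: n n_ge2 S_range => [//|N] _ _ /= Hmk bound.
exists (broom x0 Hmk Hk) => L M SuffixL LSubstr accM.
apply: leq_trans bound _.
by rewrite leq_mul2l (broom_lower_bound SuffixL LSubstr accM) orbT.
Qed.

Theorem theorem7 :
  (* upper bound O(sigma n) for Suffix *)
  (exists C : nat, forall (Sigma : finType) (n : nat) (T : trie Sigma n) (M : dfa Sigma),
      minimal_dfa M (Suffix T) -> ntrans M <= C * #|Sigma| * n) /\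
  (* lower bound Omega(sigma n) for Suffix, for some tries *)
  (exists c : nat, forall (Sigma : finType) (n : nat),
      2 <= n -> 0 < #|Sigma| <= n ->
      exists T : trie Sigma n,
        (exists M : dfa Sigma, minimal_dfa M (Suffix T)) /\
        forall M : dfa Sigma, minimal_dfa M (Suffix T) -> #|Sigma| * n <= c * ntrans M) /\
  (* upper bound O(sigma n) for Substr *)
  (exists C : nat, forall (Sigma : finType) (n : nat) (T : trie Sigma n) (M : dfa Sigma),
      minimal_dfa M (Substr T) -> ntrans M <= C * #|Sigma| * n) /\
  (* lower bound Omega(sigma n) for Substr, for some tries *)
  (exists c : nat, forall (Sigma : finType) (n : nat),
      2 <= n -> 0 < #|Sigma| <= n ->
      exists T : trie Sigma n,
        (exists M : dfa Sigma, minimal_dfa M (Substr T)) /\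
        forall M : dfa Sigma, minimal_dfa M (Substr T) -> #|Sigma| * n <= c * ntrans M).
Proof.
split; [|split; [|split]].
- by exists 3 => S n T M; apply: trie_upper_bound (suffix_dfa_accepts T).
- exists 6 => S n n_ge2 S_range; have [T lower] := trie_lower_bound n_ge2 S_range.
  exists T; split; first exact: minimal_dfa_exists (suffix_dfa_accepts T).
  by move=> M [accM _]; apply: lower accM => // w; apply: Suffix_Substr.
- by exists 3 => S n T M; apply: trie_upper_bound (substr_dfa_accepts T).
- exists 6 => S n n_ge2 S_range; have [T lower] := trie_lower_bound n_ge2 S_range.
  exists T; split; first exact: minimal_dfa_exists (substr_dfa_accepts T).
  by move=> M [accM _]; apply: lower accM => // w; apply: Suffix_Substr.
Qed.
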